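(* Let $q\geq 0$ and $n\geq 0$. Carole can win (i.e. Paul has no winning strategy in) the $q$-round pathological liar game with $1$ lie and initial state $(n,0)$ provided $$2^q>\begin{cases} n(q+1) & \text{if $n$ is even},\\ n(q+1)-(q-1) & \text{if $n$ is odd}.\end{cases}$$
   Context: Pathological liar game with $1$ lie: a state is a pair $(x_0,x_1)$ of nonnegative integers. In each of $q$ rounds Paul chooses a legal question $(a_0,a_1)$ with integers $0\leq a_i\leq x_i$, and Carole answers Y or N; the new state is $(a_0,\,a_1+x_0-a_0)$ after Y, or $(x_0-a_0,\,x_1-a_1+a_0)$ after N. Paul wins iff after $q$ rounds $x_0+x_1\geq 1$; otherwise Carole wins. *)

From Stdlib Require Import Arith ZArith Lia.

Fixpoint paul_wins (q : nat) (x0 x1 : nat) : Prop :=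
  match q with
  | O => 1 <= x0 + x1
  | S q' => exists a0 a1, a0 <= x0 /\ a1 <= x1 /\
              paul_wins q' a0 (a1 + (x0 - a0)) /\
              paul_wins q' (x0 - a0) (x1 - a1 + a0)
  end.

(* Berlekamp's volume argument.  Give the state (x0, x1) with q rounds left
   the weight x0 (q + 1) + x1.  Whatever question Paul asks, the weights of
   the two possible successor states (with q - 1 rounds left) add up exactly
   to the weight of the current state, so if the weight is below 2^q Carole
   can answer so that it stays below 2^(q - 1), and after the last round the
   state has weight 0, i.e. it is empty.  From (n, 0) with n odd the first
   question splits n into a0 and n - a0 with a0 <> n - a0, so Carole can send
   the game to the lighter of two unequal halves; this is where the extra
   q - 1 in the odd bound comes from. *)

From Stdlib Require Import Arith ZArith Lia.

Definition weight (q x0 x1 : nat) : nat := x0 * (q + 1) + x1.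

Lemma weight_split (q x0 x1 a0 a1 : nat) :
  a0 <= x0 -> a1 <= x1 ->
  weight q a0 (a1 + (x0 - a0)) + weight q (x0 - a0) (x1 - a1 + a0)
  = weight (S q) x0 x1.
Proof. unfold weight; nia. Qed.

Lemma not_paul_wins_weight_lt (q x0 x1 : nat) :
  weight q x0 x1 < 2 ^ q -> ~ paul_wins q x0 x1.
Proof.
  revert x0 x1; induction q as [|q IH]; intros x0 x1 Hw; simpl.
  - unfold weight in Hw; simpl in Hw; lia.
  - intros (a0 & a1 & Ha0 & Ha1 & HY & HN).
    pose proof (weight_split q x0 x1 a0 a1 Ha0 Ha1) as Hsplit.
    rewrite Nat.pow_succ_r' in Hw.
    destruct (Nat.lt_ge_cases (weight q a0 (a1 + (x0 - a0))) (2 ^ q)) as [HwY|HwY].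
    + exact (IH _ _ HwY HY).
    + apply (IH _ _ (ltac:(lia) : weight q (x0 - a0) (x1 - a1 + a0) < 2 ^ q) HN).
Qed.

Lemma weight_lt_of_lighter_half (q n m : nat) :
  2 * m < n -> Nat.Odd n -> n * (q + 2) < 2 ^ S q + q ->
  weight q m (n - m) < 2 ^ q.
Proof.
  intros Hm [k ->] Hbound; unfold weight.
  rewrite Nat.pow_succ_r' in Hbound; nia.
Qed.

Lemma not_paul_wins_odd (q n : nat) :
  Nat.Odd n -> n * (q + 2) < 2 ^ S q + q -> ~ paul_wins (S q) n 0.
Proof.
  intros Hodd Hbound (a0 & a1 & Ha0 & Ha1 & HY & HN).
  assert (a1 = 0) as -> by lia.
  assert (Hne : 2 * a0 <> n) by (destruct Hodd as [k Hk]; lia).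
  destruct (Nat.lt_ge_cases (2 * a0) n) as [Hlt|Hge].
  - apply (not_paul_wins_weight_lt q a0 (0 + (n - a0))); [|exact HY].
    exact (weight_lt_of_lighter_half q n a0 Hlt Hodd Hbound).
  - apply (not_paul_wins_weight_lt q (n - a0) (0 - 0 + a0)); [|exact HN].
    replace (0 - 0 + a0) with (n - (n - a0)) by lia.
    apply weight_lt_of_lighter_half; [lia|exact Hodd|exact Hbound].
Qed.

Theorem lemma11 (q n : nat) :
  (if Nat.even n
   then (Z.of_nat n * (Z.of_nat q + 1) < 2 ^ Z.of_nat q)%Z
   else (Z.of_nat n * (Z.of_nat q + 1) - (Z.of_nat q - 1) < 2 ^ Z.of_nat q)%Z) ->
  ~ paul_wins q n 0.
Proof.
  replace (2 ^ Z.of_nat q)%Z with (Z.of_nat (2 ^ q)) by apply Nat2Z.inj_pow.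
  destruct (Nat.even n) eqn:Hparity; intro Hbound.
  - apply not_paul_wins_weight_lt; unfold weight; lia.
  - destruct q as [|q].
    + apply not_paul_wins_weight_lt; unfold weight; simpl in *; lia.
    + apply not_paul_wins_odd; [|lia].
      apply Nat.odd_spec; rewrite <- Nat.negb_even, Hparity; reflexivity.
Qed.
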